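(* Let $\mathbf k$ be a field of characteristic $2$ which is finite or algebraically closed, $V$ a $\mathbf k$-vector space of even dimension $D$ with a nondegenerate quadratic form $Q$, and assume there exists a $D/2$-dimensional subspace $S\subset V$ with $Q|_S=0$. Let $N\in\tilde{\mathcal M}_Q$. Then for any such $S$, $\dim\big(S/(S\cap(1+N)(S))\big)\equiv\dim\ker N\pmod 2$.
   Context: $\langle x,y\rangle=Q(x+y)-Q(x)-Q(y)$ (here alternating, since the characteristic is $2$), with radical $R$; $Q$ is nondegenerate if $Q|_R$ is injective (for $D$ even this forces $R=0$). $\tilde{\mathcal M}_Q$ is the set of nilpotent $N\in\mathrm{End}(V)$ with $Q(Nx)=-\langle x,Nx\rangle$ for all $x\in V$ (equivalently, $1+N$ is a unipotent element of the orthogonal group $O_Q$). *)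

From HB Require Import structures.
From mathcomp Require Import all_boot all_order all_algebra.
Set Implicit Arguments. Unset Strict Implicit. Unset Printing Implicit Defensive.
Import GRing.Theory.
Local Open Scope ring_scope.

(* V = 'rV[F]_D (row vectors); endomorphisms act on the right: x |-> x *m N. *)

Definition polar (F : fieldType) (D : nat) (Q : 'rV[F]_D -> F) (x y : 'rV[F]_D) : F :=
  Q (x + y) - Q x - Q y.

Definition is_quadratic_form (F : fieldType) (D : nat) (Q : 'rV[F]_D -> F) : Prop :=
  (forall (a : F) x, Q (a *: x) = a ^+ 2 * Q x) /\
  (forall (a : F) x y z, polar Q (a *: x + y) z = a * polar Q x z + polar Q y z) /\
  (forall (a : F) x y z, polar Q x (a *: y + z) = a * polar Q x y + polar Q x z).

Definition in_radical (F : fieldType) (D : nat) (Q : 'rV[F]_D -> F) (x : 'rV[F]_D) : Prop :=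
  forall y, polar Q x y = 0.

Definition qf_nondegenerate (F : fieldType) (D : nat) (Q : 'rV[F]_D -> F) : Prop :=
  forall x y, in_radical Q x -> in_radical Q y -> Q x = Q y -> x = y.

Definition in_tildeM (F : fieldType) (D : nat) (Q : 'rV[F]_D -> F) (N : 'M[F]_D) : Prop :=
  (exists k : nat, N ^+ k = 0) /\
  (forall x, Q (x *m N) = - polar Q x (x *m N)).

Definition finite_or_alg_closed (F : fieldType) : Prop :=
  (exists s : seq F, forall x : F, x \in s) \/ GRing.closed_field_axiom F.

(* Let B be the polar form of Q and G = 1 + N, an isometry of Q.  In characteristic 2
   B is alternating, hence of even rank; as D is even and every scalar is a square,
   nondegeneracy of Q forces B to be nondegenerate.  Isometry of G gives
   ker N = (Im N)^perp, and S = S^perp.  On Y = N^-1(S) the form (y, z) |-> B(y, zN)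
   is alternating since B(y, yN) = -Q(yN) = 0, and its radical is
   Y :&: (S + ker N) = Y :&: (S :&: Im N)^perp; so dim Y - dim (Y :&: (S + ker N)) is
   even.  Counting dimensions turns this into dim SN - dim (S :&: SN) = dim ker N
   (mod 2), and S + SG = S + SN gives the claim. *)

From HB Require Import structures.
From mathcomp Require Import all_boot all_order all_algebra.
From mathcomp Require Import zify ring.
Set Implicit Arguments. Unset Strict Implicit. Unset Printing Implicit Defensive.
Import GRing.Theory.
Local Open Scope ring_scope.

Section AlternatingForms.
Variable F : fieldType.

Lemma mulmx11C (a b : 'M[F]_1) : a *m b = b *m a.
Proof. by rewrite [b]mx11_scalar scalar_mxC. Qed.

Lemma delta_mx_form n (A : 'M[F]_n) i j :
  delta_mx 0 i *m A *m (delta_mx 0 j)^T = (A i j)%:M :> 'M_1.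
Proof. by rewrite trmx_delta -rowE -colE [LHS]mx11_scalar !mxE. Qed.

Lemma scalar_mx11_inj : injective (fun a : F => a%:M : 'M_1).
Proof. by move=> a b /matrixP/(_ 0 0); rewrite !mxE eqxx !mulr1n. Qed.

Lemma mx_form_inj n (A B : 'M[F]_n) :
  (forall x y : 'rV_n, x *m A *m y^T = x *m B *m y^T) -> A = B.
Proof.
move=> eqAB; apply/matrixP => i j.
by have := eqAB 'e_i 'e_j; rewrite !delta_mx_form => /scalar_mx11_inj.
Qed.

Lemma mxrank_adds_rV m n p (X : 'M[F]_(m, n)) (w : 'rV_n) (M : 'M_(n, p)) :
  (X <= kermx M)%MS -> w *m M != 0 -> \rank (X + w)%MS = (\rank X).+1.
Proof.
move=> /sub_kermxP XM0 wM0; have wX : ~~ (w <= X)%MS.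
  by apply: contra wM0 => /submxP[c ->]; rewrite -mulmxA XM0 mulmx0.
apply/eqP; rewrite eqn_leq; apply/andP; split.
  rewrite (leq_trans (mxrank_adds_leqif X w).1) //.
  by rewrite -[(\rank X).+1]addn1 leq_add2l rank_leq_row.
apply: rank_ltmx; rewrite ltmxE addsmxSl /=.
by apply: contra wX => /(submx_trans (addsmxSr X w)).
Qed.

Definition alternating n (A : 'M[F]_n) := forall z : 'rV_n, z *m A *m z^T = 0.

Lemma alternating_skew n (A : 'M[F]_n) : alternating A ->
  forall x y : 'rV_n, x *m A *m y^T = - (y *m A *m x^T).
Proof.
move=> altA x y; apply/eqP; rewrite -addr_eq0; apply/eqP.
have := altA (x + y).
by rewrite linearD /= !(mulmxDl, mulmxDr) !altA add0r addr0.
Qed.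

Lemma alternating_unit_pair n (A : 'M[F]_n) :
  A != 0 -> exists u v : 'rV_n, u *m A *m v^T = 1%:M.
Proof.
move=> nzA; have /existsP[[i j] /= Aij] : [exists ij : 'I_n * 'I_n, A ij.1 ij.2 != 0].
  apply: contraNT nzA => /existsPn A0; apply/eqP/matrixP => i j.
  by have := A0 (i, j); rewrite negbK mxE => /eqP.
exists 'e_i, ((A i j)^-1 *: 'e_j).
by rewrite linearZ /= -scalemxAr delta_mx_form scale_scalar_mx mulVf.
Qed.

Lemma alternating_rank_reduce n (A : 'M[F]_n) : alternating A -> A != 0 ->
  exists2 A' : 'M_n, alternating A' & \rank A = (\rank A').+2.
Proof.
move=> altA /alternating_unit_pair[u [v uv1]].
have vu1 : v *m A *m u^T = - 1%:M by rewrite alternating_skew // uv1.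
(* A' splits off the hyperbolic plane spanned by u and v. *)
pose A' := A - A *m v^T *m (u *m A) + A *m u^T *m (v *m A).
have formA' z w : z *m A' *m w^T = z *m A *m w^T
    - z *m A *m v^T *m (u *m A *m w^T) + z *m A *m u^T *m (v *m A *m w^T).
  by rewrite !(mulmxDr, mulmxDl, mulmxN, mulNmx) !mulmxA.
exists A'.
  move=> z; rewrite formA' altA (alternating_skew altA u) (alternating_skew altA v).
  by rewrite !mulmxN sub0r opprK mulmx11C subrr.
have A'u : A' *m u^T = 0.
  by have := formA' _ _ 1%:M u; rewrite !mul1mx altA vu1 mulmx0 subr0 mulmxN mulmx1 addrN.
have A'v : A' *m v^T = 0.
  by have := formA' _ _ 1%:M v; rewrite !mul1mx altA uv1 mulmx0 addr0 mulmx1 subrr.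
have /eqmxP eqA : (A == A' + u *m A + v *m A)%MS.
  apply/andP; split.
    rewrite -{1}[A](_ : A' + A *m v^T *m (u *m A) - A *m u^T *m (v *m A) = A).
      by rewrite !addmx_sub_adds ?submx_refl ?eqmx_opp ?submxMl.
    by rewrite /A' addrAC addrK subrK.
  by rewrite !addsmx_sub !submxMl /A' !mulmxA !addmx_sub ?eqmx_opp //; apply: submxMl.
rewrite eqA (mxrank_adds_rV (M := u^T)); last by rewrite vu1 oppr_eq0 matrix_nonzero1.
  by rewrite (mxrank_adds_rV (M := v^T)) ?uv1 ?matrix_nonzero1 // sub_kermx A'v.
by rewrite addsmx_sub !sub_kermx A'u altA !eqxx.
Qed.

Lemma alternating_rank_even n (A : 'M[F]_n) : alternating A -> ~~ odd (\rank A).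
Proof.
have [r] := ubnP (\rank A); elim: r A => // r IHr A ltAr altA.
have [-> | nzA] := eqVneq A 0; first by rewrite mxrank0.
have [A' altA' rankA] := alternating_rank_reduce altA nzA.
rewrite rankA /= negbK; apply: IHr altA'; lia.
Qed.

End AlternatingForms.

Definition perpmx (F : fieldType) n (J : 'M[F]_n) m (X : 'M[F]_(m, n)) := kermx (J *m X^T).

Section Orthogonal.
Variables (F : fieldType) (n : nat) (J : 'M[F]_n).
Hypotheses (Jsym : J^T = J) (Junit : J \in unitmx).

Lemma sub_perpmx m p (X : 'M[F]_(m, n)) (Y : 'M[F]_(p, n)) :
  (Y <= perpmx J X)%MS = (Y *m J *m X^T == 0).
Proof. by rewrite sub_kermx mulmxA. Qed.

Lemma sub_perpmxC m p (X : 'M[F]_(m, n)) (Y : 'M[F]_(p, n)) :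
  (Y <= perpmx J X)%MS = (X <= perpmx J Y)%MS.
Proof. by rewrite !sub_perpmx -trmx_eq0 !trmx_mul trmxK Jsym mulmxA. Qed.

Lemma mxrank_perpmx m (X : 'M[F]_(m, n)) : \rank (perpmx J X) = (n - \rank X)%N.
Proof.
rewrite mxrank_ker -mxrank_tr trmx_mul trmxK mxrankMfree //.
by rewrite row_free_unit unitmx_tr.
Qed.

Lemma perpmx_eq_rank m p (X : 'M[F]_(m, n)) (Y : 'M[F]_(p, n)) :
  (Y <= perpmx J X)%MS -> (\rank X + \rank Y = n)%N -> (perpmx J X :=: Y)%MS.
Proof.
move=> sYX rankXY; apply/eqmx_sym/eqmxP.
by rewrite -(mxrank_leqif_eq sYX) mxrank_perpmx; apply/eqP; lia.
Qed.

Lemma perpmxS m p (X : 'M[F]_(m, n)) (Y : 'M[F]_(p, n)) :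
  (X <= Y)%MS -> (perpmx J Y <= perpmx J X)%MS.
Proof. by move=> sXY; rewrite sub_perpmxC (submx_trans sXY) // -sub_perpmxC. Qed.

Lemma eqmx_perpmx m p (X : 'M[F]_(m, n)) (Y : 'M[F]_(p, n)) :
  (X :=: Y)%MS -> (perpmx J X :=: perpmx J Y)%MS.
Proof. by move=> eqXY; apply/eqmxP/andP; split; apply: perpmxS; rewrite eqXY. Qed.

Lemma perpmxK m (X : 'M[F]_(m, n)) : (perpmx J (perpmx J X) :=: X)%MS.
Proof.
apply: perpmx_eq_rank; first by rewrite sub_perpmxC.
by rewrite mxrank_perpmx subnK ?rank_leq_col.
Qed.

Lemma perpmx_adds m p (X : 'M[F]_(m, n)) (Y : 'M[F]_(p, n)) :
  (perpmx J (X + Y)%MS :=: perpmx J X :&: perpmx J Y)%MS.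
Proof.
apply/eqmxP/andP; split.
  by rewrite sub_capmx; apply/andP; split; apply: perpmxS; rewrite ?addsmxSl ?addsmxSr.
rewrite sub_perpmxC addsmx_sub; apply/andP; split; rewrite -sub_perpmxC.
  exact: capmxSl.
exact: capmxSr.
Qed.

End Orthogonal.

Lemma kermx_cokermx (F : fieldType) q p (Z : 'M[F]_(q, p)) : (kermx (cokermx Z) :=: Z)%MS.
Proof. by apply/eqmxP/andP; split; [rewrite submxE mulmx_ker | rewrite sub_kermx -submxE]. Qed.

Definition preimmx (F : fieldType) n p q (M : 'M[F]_(n, p)) (Z : 'M[F]_(q, p)) :=
  kermx (M *m cokermx Z).

Section Preimage.
Variables (F : fieldType) (n p q : nat) (M : 'M[F]_(n, p)) (Z : 'M[F]_(q, p)).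

Lemma sub_preimmx m (X : 'M_(m, n)) : (X <= preimmx M Z)%MS = (X *m M <= Z)%MS.
Proof. by rewrite sub_kermx mulmxA -submxE. Qed.

Lemma preimmxM : (preimmx M Z *m M :=: M :&: Z)%MS.
Proof.
apply/eqmxP/andP; split; first by rewrite sub_capmx submxMl -sub_preimmx submx_refl.
rewrite -[X in (X <= _)%MS](mulmxKpV (capmxSl M Z)) submxMr // sub_preimmx.
by rewrite mulmxKpV ?capmxSl ?capmxSr.
Qed.

Lemma mxrank_cap_preimmx m (X : 'M_(m, n)) :
  (\rank (X :&: preimmx M Z) + \rank (X *m M) = \rank X + \rank (X *m M :&: Z))%N.
Proof.
have := mxrank_mul_ker X (M *m cokermx Z); rewrite mulmxA.
have := mxrank_mul_ker (X *m M) (cokermx Z).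
rewrite (cap_eqmx (eqmx_refl _) (kermx_cokermx Z)) /preimmx; lia.
Qed.

End Preimage.

Section IsometryParity.
Variables (F : fieldType) (n : nat) (J N S : 'M[F]_n).
Hypotheses (Jsym : J^T = J) (Junit : J \in unitmx).
Hypothesis isometry : (1%:M + N) *m J *m (1%:M + N)^T = J.
Hypothesis lagrangian : (perpmx J S :=: S)%MS.
Hypothesis preimage_isotropic :
  forall y : 'rV_n, (y *m N <= S)%MS -> y *m J *m (y *m N)^T = 0.

Lemma isometry_unit : (1%:M + N) \in unitmx.
Proof.
have : (1%:M + N) *m (J *m (1%:M + N)^T *m invmx J) = 1%:M.
  by rewrite !mulmxA isometry mulmxV.
by case/mulmx1_unit.
Qed.

Lemma perpmx_image : (perpmx J N :=: kermx N)%MS.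
Proof.
apply: (perpmx_eq_rank Junit); last by rewrite mxrank_ker subnKC ?rank_leq_col.
rewrite sub_perpmx; apply/eqP.
have := congr1 (mulmx (kermx N)) isometry.
rewrite linearD /= trmx1 !(mulmxDl, mulmxDr) mul1mx !mulmx1 !mulmxA mulmx_ker !mul0mx.
by rewrite !addr0 => /(canRL (addKr _)); rewrite addNr.
Qed.

Lemma perpmx_preimage : (perpmx J (preimmx N S *m N) :=: S + kermx N)%MS.
Proof.
have perp_ker : (perpmx J (kermx N) :=: N)%MS.
  exact: eqmx_trans (eqmx_perpmx Jsym (eqmx_sym perpmx_image)) (perpmxK Jsym Junit N).
have perp_sum : (perpmx J (S + kermx N)%MS :=: N :&: S)%MS.
  apply: eqmx_trans (perpmx_adds Jsym S (kermx N)) _.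
  by rewrite capmxC; apply: cap_eqmx.
apply: eqmx_trans (eqmx_perpmx Jsym (preimmxM N S)) _.
exact: eqmx_trans (eqmx_perpmx Jsym (eqmx_sym perp_sum)) (perpmxK Jsym Junit _).
Qed.

Lemma alternating_preimage_form :
  alternating (preimmx N S *m J *m (preimmx N S *m N)^T).
Proof.
move=> z; set Y := preimmx N S.
have -> : z *m (Y *m J *m (Y *m N)^T) *m z^T = z *m Y *m J *m (z *m Y *m N)^T.
  by rewrite !trmx_mul !mulmxA.
by apply: preimage_isotropic; rewrite -mulmxA (submx_trans (submxMl _ _)) // -sub_preimmx.
Qed.

Lemma isometry_parity :
  (\rank S - \rank (S :&: S *m (1%:M + N)) = \rank (kermx N) %[mod 2])%N.
Proof.
set Y := preimmx N S; set X := (S + kermx N)%MS.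
have evenA := alternating_rank_even alternating_preimage_form.
have rankA : (\rank (Y *m J *m (Y *m N)^T) + \rank (Y :&: X) = \rank Y)%N.
  by rewrite -(cap_eqmx (eqmx_refl Y) perpmx_preimage) -mulmxA mxrank_mul_ker.
have rankY := mxrank_cap_preimmx N S 1%:M.
rewrite cap1mx mul1mx mxrank1 in rankY.
have rankX : (\rank X + \rank (N :&: S) = n)%N.
  have := mxrank_perpmx Junit (Y *m N); rewrite perpmx_preimage preimmxM => ->.
  by rewrite subnK ?rank_leq_col.
have rankXY := mxrank_cap_preimmx N S X.
have XN : (X *m N :=: S *m N)%MS.
  by apply: eqmx_trans (addsmxMr _ _ _) _; rewrite mulmx_ker; apply: addsmx0.
rewrite capmxC XN (cap_eqmx XN (eqmx_refl S)) in rankXY.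
have rankN := mxrank_ker N.
have rankS : (\rank S + \rank S = n)%N.
  by have := mxrank_perpmx Junit S; rewrite lagrangian; have := rank_leq_col S; lia.
have sumSG : (S + S *m (1%:M + N) :=: S + S *m N)%MS.
  apply/eqmxP/andP; split; rewrite addsmx_sub addsmxSl /=.
    by rewrite mulmxDr mulmx1 addmx_sub_adds.
  by rewrite -[S *m N](addKr S) mulmxDr mulmx1 addmx_sub_adds // eqmx_opp.
have rankSG := mxrank_sum_cap S (S *m (1%:M + N)).
rewrite sumSG mxrankMfree ?row_free_unit ?isometry_unit // in rankSG.
have rankSN := mxrank_sum_cap S (S *m N).
rewrite capmxC in rankSN.
have := mxrankS (addsmxSl S (S *m N)).
rewrite -/Y in evenA rankY rankXY; have := rank_leq_col N; lia.
Qed.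

End IsometryParity.

Lemma pchar2_sqr_surjective (F : fieldType) :
  (2 \in [pchar F])%N -> finite_or_alg_closed F -> forall c : F, exists a, a ^+ 2 = c.
Proof.
move=> pchar2 [[s sF] | closedF] c; last first.
  have [a] := closedF 2 (fun i => if i == 0 then c else 0) isT.
  by rewrite big_ord_recl big_ord1 /= expr0 mulr1 mul0r addr0; exists a.
have sqr_inj : injective (fun a : F => a ^+ 2).
  by move=> a b /=; rewrite -!(pFrobenius_autE pchar2) => /fmorph_inj.
have sqr_uniq : uniq [seq a ^+ 2 | a <- undup s] by rewrite map_inj_uniq ?undup_uniq.
have sqr_sub : {subset [seq a ^+ 2 | a <- undup s] <= undup s}.
  by move=> x _; rewrite mem_undup.
have [_ sqr_all] := uniq_min_size sqr_uniq sqr_sub (eq_leq (esym (size_map _ _))).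
by have := sF c; rewrite -mem_undup -sqr_all => /mapP[a _ ->]; exists a.
Qed.

Section QuadraticForm.
Variables (F : fieldType) (D : nat) (Q : 'rV[F]_D -> F).
Hypothesis qfQ : is_quadratic_form Q.

Lemma qf0 : Q 0 = 0.
Proof. by have := qfQ.1 0 0; rewrite scale0r expr0n mul0r. Qed.

Lemma polarC x y : polar Q x y = polar Q y x.
Proof. by rewrite /polar [y + x]addrC addrAC. Qed.

Lemma polarDl x y z : polar Q (x + y) z = polar Q x z + polar Q y z.
Proof. by have := qfQ.2.1 1 x y z; rewrite scale1r mul1r. Qed.

Lemma polar0l z : polar Q 0 z = 0.
Proof. by apply: (@addrI _ (polar Q 0 z)); rewrite -polarDl !addr0. Qed.

Lemma polarZl a x z : polar Q (a *: x) z = a * polar Q x z.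
Proof. by have := qfQ.2.1 a x 0 z; rewrite addr0 polar0l addr0. Qed.

Lemma qfD x y : Q (x + y) = Q x + Q y + polar Q x y.
Proof. by rewrite /polar; ring. Qed.

Lemma polar_coordl x z : polar Q x z = \sum_(i < D) x 0 i * polar Q 'e_i z.
Proof.
rewrite {1}(row_sum_delta x); apply: (big_rec2 (fun p q => polar Q p z = q)).
  exact: polar0l.
by move=> i p q _ <-; rewrite polarDl polarZl.
Qed.

Definition gram_mx : 'M[F]_D := \matrix_(i, j) polar Q 'e_i 'e_j.

Lemma polarE x y : x *m gram_mx *m y^T = (polar Q x y)%:M.
Proof.
rewrite [LHS]mx11_scalar polar_coordl mxE; congr _%:M.
under eq_bigr do rewrite mxE big_distrl /=.
rewrite exchange_big; apply: eq_bigr => i _ /=.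
rewrite polarC polar_coordl big_distrr; apply: eq_bigr => j _.
by rewrite !mxE polarC /= mulrAC mulrA.
Qed.

Lemma gram_mx_sym : gram_mx^T = gram_mx.
Proof. by apply/matrixP => i j; rewrite !mxE polarC. Qed.

Lemma gram_mx_isometry G : (forall x, Q (x *m G) = Q x) -> G *m gram_mx *m G^T = gram_mx.
Proof.
move=> QG; apply: mx_form_inj => x y.
have -> : x *m (G *m gram_mx *m G^T) *m y^T = x *m G *m gram_mx *m (y *m G)^T.
  by rewrite trmx_mul !mulmxA.
by rewrite polarE [RHS]polarE /polar -mulmxDl !QG.
Qed.

Lemma isotropic_sub_perpmx m (S : 'M[F]_(m, D)) :
  (forall v : 'rV_D, (v <= S)%MS -> Q v = 0) -> (S <= perpmx gram_mx S)%MS.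
Proof.
move=> isoS; rewrite sub_perpmx; apply/eqP/mx_form_inj => x y.
have -> : x *m (S *m gram_mx *m S^T) *m y^T = x *m S *m gram_mx *m (y *m S)^T.
  by rewrite trmx_mul !mulmxA.
have Sx := submxMl x S; have Sy := submxMl y S.
by rewrite polarE /polar !isoS ?addmx_sub // !subr0 mulmx0 mul0mx raddf0.
Qed.

Lemma tildeM_isometry (N : 'M[F]_D) :
  in_tildeM Q N -> forall x, Q (x *m (1%:M + N)) = Q x.
Proof. by move=> [_ QN] x; rewrite mulmxDr mulmx1 qfD QN addrNK. Qed.

Lemma tildeM_preimage_isotropic (N : 'M[F]_D) m (S : 'M[F]_(m, D)) :
  in_tildeM Q N -> (forall v : 'rV_D, (v <= S)%MS -> Q v = 0) ->
  forall y : 'rV_D, (y *m N <= S)%MS -> y *m gram_mx *m (y *m N)^T = 0.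
Proof.
move=> [_ QN] isoS y yNS; rewrite polarE -[polar _ _ _]opprK -QN isoS //.
by rewrite oppr0 raddf0.
Qed.

Lemma kermx_gram_radical w : (w <= kermx gram_mx)%MS -> in_radical Q w.
Proof.
move=> /sub_kermxP wJ y; apply: scalar_mx11_inj.
by rewrite /= -polarE wJ !mul0mx raddf0.
Qed.

Hypothesis pchar2 : (2 \in [pchar F])%N.

Lemma gram_mx_alternating : alternating gram_mx.
Proof.
move=> z; rewrite polarE /polar -mulr2n -scaler_nat (pcharf0 pchar2) scale0r qf0.
by rewrite sub0r -opprD addrr_pchar2 // oppr0 raddf0.
Qed.

(* On the kernel of the Gram matrix Q is additive and Q (a *: u) = a ^+ 2 * Q u, so
   once every scalar is a square two independent kernel vectors combine into a
   nonzero one on which Q vanishes. *)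
Lemma kermx_gram_rank_le1 : (forall c : F, exists a, a ^+ 2 = c) ->
  qf_nondegenerate Q -> (\rank (kermx gram_mx) <= 1)%N.
Proof.
move=> sqr ndQ; rewrite leqNgt; apply/negP => rk2.
set K := kermx gram_mx; set B := row_base K.
have radB i : in_radical Q (row i B).
  by apply: kermx_gram_radical; rewrite (submx_trans (row_sub i B)) ?eq_row_base.
have rad0 : in_radical Q 0 by move=> y; apply: polar0l.
have nzB (c : 'rV_(\rank K)) j : c 0 j != 0 -> c *m B != 0.
  move=> cj; rewrite mulmx_free_eq0 ?row_base_free //.
  by apply: contra cj => /eqP ->; rewrite mxE.
pose i0 : 'I_(\rank K) := Ordinal (ltnW rk2); pose i1 : 'I_(\rank K) := Ordinal rk2.
set u := row i0 B; set v := row i1 B.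
have Qu : Q u != 0.
  apply: contraNneq (nzB 'e_i0 i0 _) => [Qu0|]; last by rewrite mxE !eqxx oner_eq0.
  by rewrite -rowE (ndQ _ _ (radB i0) rad0) ?Qu0 ?qf0.
have [a Qa] := sqr (Q v / Q u).
have Qw : Q (a *: u + v) = 0.
  rewrite qfD qfQ.1 Qa divfK // polarZl (radB i0) mulr0 addr0.
  exact: addrr_pchar2.
have w0 : a *: u + v = 0.
  apply: (ndQ _ _ _ rad0); last by rewrite Qw qf0.
  by move=> y; rewrite polarDl polarZl (radB i0) (radB i1) mulr0 addr0.
suff : (a *: 'e_i0 + 'e_i1 : 'rV_(\rank K)) *m B != 0.
  by rewrite mulmxDl -scalemxAl -!rowE w0 eqxx.
by apply: (nzB _ i1); rewrite !mxE !eqxx /= mulr0 add0r oner_eq0.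
Qed.

Lemma gram_mx_unit : finite_or_alg_closed F -> ~~ odd D -> qf_nondegenerate Q ->
  gram_mx \in unitmx.
Proof.
move=> hF evenD ndQ; rewrite -row_free_unit /row_free.
have := kermx_gram_rank_le1 (pchar2_sqr_surjective pchar2 hF) ndQ.
have := alternating_rank_even gram_mx_alternating.
rewrite mxrank_ker; move: (rank_leq_col gram_mx) evenD; move: (\rank gram_mx) => r.
lia.
Qed.

End QuadraticForm.

Theorem mainTheorem10 (F : fieldType) (D : nat) (Q : 'rV[F]_D -> F) (N : 'M[F]_D) :
  (2 \in [pchar F])%N ->
  finite_or_alg_closed F ->
  ~~ odd D ->
  is_quadratic_form Q ->
  qf_nondegenerate Q ->
  (exists S0 : 'M[F]_D, \rank S0 = D./2 /\ forall v : 'rV[F]_D, (v <= S0)%MS -> Q v = 0) ->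
  in_tildeM Q N ->
  forall S : 'M[F]_D,
    \rank S = D./2 ->
    (forall v : 'rV[F]_D, (v <= S)%MS -> Q v = 0) ->
    (\rank S - \rank (S :&: S *m (1%:M + N))%MS = \rank (kermx N) %[mod 2])%N.
Proof.
(* S itself is a Lagrangian. *)
move=> pchar2 hF evenD qfQ ndQ _ tildeN S rankS isoS.
have Junit := gram_mx_unit qfQ pchar2 hF evenD ndQ.
apply: (isometry_parity (gram_mx_sym Q) Junit).
- exact/(gram_mx_isometry qfQ)/(tildeM_isometry tildeN).
- apply: (perpmx_eq_rank Junit (isotropic_sub_perpmx qfQ isoS)).
  by rewrite rankS addnn -[RHS]odd_double_half (negbTE evenD).
- by move=> y; apply: tildeM_preimage_isotropic.
Qed.
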